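(* Let $u$ be any solution of the linear system $u'=Au$ that lies in $\mathbb V$, for example $u(t)=\big(\tfrac{A_2}{2d}y_0e^{-2t},\,y_0e^{-2t},\,z_0e^{-2t},\,w_0e^{-2t}\big)$ with $y_0,z_0,w_0\in\mathbb R$. Then the operator $T_u:\mathbb V\to\mathbb V$ has at most one fixed point.
   Context: Fix a positive integer $d$ and $q\in\mathbb R$. Put $A_2=d(d+2)$ and $A_3=\tfrac14d(d+2)^2q^2$. Write system (S$'$) (below) as $v'=Av+b(v)$ for $v=(v_1,v_2,v_3,v_4)=(X,\tilde Y,\tilde Z,W)$, where $A$ is its linearization at the origin, $$A=\begin{pmatrix}0&-A_2/d&0&0\\0&-2&0&0\\0&0&-2&0\\0&0&0&-2\end{pmatrix},$$ and $b:\mathbb R^4\to\mathbb R^4$ collects the remaining terms. Each component of $b$ is a polynomial of degree at most 3 with no constant or linear terms. System (S$'$) is $$X'=-X(dX^2+\tilde Z^2-2\tilde Z)-\tfrac{A_2}{d}\tilde Y+2\tfrac{A_3}{d}W^2,\qquad \tilde Y'=-2\tilde Y(dX^2-X+\tilde Z^2-2\tilde Z+1),$$ $$\tilde Z'=-\tilde Z(dX^2+\tilde Z^2-3\tilde Z+2)+dX^2+A_3W^2,\qquad W'=-W(dX^2-2X+\tilde Z^2-3\tilde Z+2).$$ $\Phi(t,s)=e^{A(t-s)}$ is the fundamental matrix. Explicitly, its first row is $\big(1,\tfrac{A_2}{2d}(e^{-2(t-s)}-1),0,0\big)$, its other diagonal entries are $e^{-2(t-s)}$, and its remaining entries are $0$.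 $\mathbb V=\{v\in C([0,\infty),\mathbb R^4):\sup_{t\ge0}e^{2t}|v(t)|<\infty\}$ carries the norm $\|v\|=\sup_{t\ge0}e^{2t}|v(t)|$. For such $u$, $$T_uv(t)=u(t)-\int_t^\infty\Phi(t,s)\,b(v(s))\,ds.$$ *)

From Stdlib Require Import Reals Lra.
Open Scope R_scope.

(* Vectors of R^4, v = (v1,v2,v3,v4) = (X, Ytilde, Ztilde, W). *)
Record vec4 := mk4 { c1 : R; c2 : R; c3 : R; c4 : R }.

Definition vnorm (v : vec4) : R :=
  sqrt (c1 v ^ 2 + c2 v ^ 2 + c3 v ^ 2 + c4 v ^ 2).

Definition vsub (v w : vec4) : vec4 :=
  mk4 (c1 v - c1 w) (c2 v - c2 w) (c3 v - c3 w) (c4 v - c4 w).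

Definition A2 (d : nat) : R := INR d * (INR d + 2).
Definition A3 (d : nat) (q : R) : R := / 4 * INR d * (INR d + 2) ^ 2 * q ^ 2.

Definition Fsys (d : nat) (q : R) (v : vec4) : vec4 :=
  let X := c1 v in let Y := c2 v in let Z := c3 v in let W := c4 v in
  let dR := INR d in
  mk4 (- X * (dR * X ^ 2 + Z ^ 2 - 2 * Z) - A2 d / dR * Y + 2 * (A3 d q / dR) * W ^ 2)
      (- 2 * Y * (dR * X ^ 2 - X + Z ^ 2 - 2 * Z + 1))
      (- Z * (dR * X ^ 2 + Z ^ 2 - 3 * Z + 2) + dR * X ^ 2 + A3 d q * W ^ 2)
      (- W * (dR * X ^ 2 - 2 * X + Z ^ 2 - 3 * Z + 2)).

(* Linearization A at the origin, applied to v. *)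
Definition Aapp (d : nat) (v : vec4) : vec4 :=
  mk4 (- (A2 d / INR d) * c2 v) (-2 * c2 v) (-2 * c3 v) (-2 * c4 v).

Definition bnl (d : nat) (q : R) (v : vec4) : vec4 := vsub (Fsys d q v) (Aapp d v).

(* Fundamental matrix Phi(t,s) = e^{A(t-s)} applied to a vector. *)
Definition Phi_app (d : nat) (t s : R) (v : vec4) : vec4 :=
  let e := exp (-2 * (t - s)) in
  mk4 (c1 v + A2 d / (2 * INR d) * (e - 1) * c2 v)
      (e * c2 v) (e * c3 v) (e * c4 v).

Definition cont_on_nonneg (f : R -> R) : Prop :=
  forall t, 0 <= t -> forall eps, 0 < eps -> exists delta, 0 < delta /\
    forall s, 0 <= s -> Rabs (s - t) < delta -> Rabs (f s - f t) < eps.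

Definition inV (v : R -> vec4) : Prop :=
  cont_on_nonneg (fun t => c1 (v t)) /\ cont_on_nonneg (fun t => c2 (v t)) /\
  cont_on_nonneg (fun t => c3 (v t)) /\ cont_on_nonneg (fun t => c4 (v t)) /\
  exists K, forall t, 0 <= t -> exp (2 * t) * vnorm (v t) <= K.

Definition improper_int (f : R -> R) (a L : R) : Prop :=
  (forall x, a <= x -> inhabited (Riemann_integrable f a x)) /\
  forall eps, 0 < eps -> exists M, forall x (pr : Riemann_integrable f a x),
    a <= x -> M <= x -> Rabs (RiemannInt pr - L) < eps.

Definition solves_linear (d : nat) (u : R -> vec4) : Prop :=
  forall t, 0 < t ->
    derivable_pt_lim (fun s => c1 (u s)) t (c1 (Aapp d (u t))) /\
    derivable_pt_lim (fun s => c2 (u s)) t (c2 (Aapp d (u t))) /\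
    derivable_pt_lim (fun s => c3 (u s)) t (c3 (Aapp d (u t))) /\
    derivable_pt_lim (fun s => c4 (u s)) t (c4 (Aapp d (u t))).

Definition fixed_point_T (d : nat) (q : R) (u v : R -> vec4) : Prop :=
  inV v /\
  forall t, 0 <= t ->
    improper_int (fun s => c1 (Phi_app d t s (bnl d q (v s)))) t (c1 (u t) - c1 (v t)) /\
    improper_int (fun s => c2 (Phi_app d t s (bnl d q (v s)))) t (c2 (u t) - c2 (v t)) /\
    improper_int (fun s => c3 (Phi_app d t s (bnl d q (v s)))) t (c3 (u t) - c3 (v t)) /\
    improper_int (fun s => c4 (Phi_app d t s (bnl d q (v s)))) t (c4 (u t) - c4 (v t)).

(** Let [S t] be the l1 distance between two fixed points at time [t].  Both decay like
    [e^{-2t}], so on [[t, oo)] the nonlinearity [b] is Lipschitz with constant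
    [O(e^{-2s})], which exactly absorbs the growth [e^{2(s-t)}] of [Phi(t,s)]; hence
    [S t <= c e^{-2t} \int_t^oo S].  Iterating from [S s <= B e^{-2s}] gives
    [S t <= B (c/2)^n / n! * e^{-(2n+2)t}] for every [n], so [S = 0]. *)

From Pilot Require Import Defs.
From Stdlib Require Import Reals Lra.
From Coquelicot Require Import Coquelicot.
(* Re-import so that [c1] again denotes the first coordinate of a [vec4]. *)
Import Pilot.Defs.
Open Scope R_scope.

Lemma exp_le_compat x y : x <= y -> exp x <= exp y.
Proof.
  intros [Hlt | ->]; [now left; apply exp_increasing | apply Rle_refl].
Qed.

Lemma Rabs_sub_le x y : Rabs (x - y) <= Rabs x + Rabs y.
Proof. rewrite <- (Rabs_Ropp y). apply Rabs_triang. Qed.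

(** * Improper integrals *)

Lemma improper_int_dist_le f1 f2 g t L1 L2 G :
  improper_int f1 t L1 -> improper_int f2 t L2 ->
  (forall s, t <= s -> Rabs (f1 s - f2 s) <= g s) ->
  (forall x, t <= x -> ex_RInt g t x /\ RInt g t x <= G) ->
  Rabs (L1 - L2) <= G.
Proof.
  intros [I1 C1] [I2 C2] Hfg Hg.
  apply Rnot_lt_le; intro HG.
  set (eps := (Rabs (L1 - L2) - G) / 3).
  assert (Heps : 0 < eps) by (unfold eps; lra).
  destruct (C1 eps Heps) as [M1 HM1], (C2 eps Heps) as [M2 HM2].
  set (x := Rmax t (Rmax M1 M2)).
  assert (Htx : t <= x) by apply Rmax_l.
  assert (HM1x : M1 <= x) by (eapply Rle_trans; [apply Rmax_l | apply Rmax_r]).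
  assert (HM2x : M2 <= x) by (eapply Rle_trans; [apply Rmax_r | apply Rmax_r]).
  destruct (I1 x Htx) as [pr1], (I2 x Htx) as [pr2], (Hg x Htx) as [Eg Hgx].
  specialize (HM1 x pr1 Htx HM1x); specialize (HM2 x pr2 Htx HM2x).
  rewrite <- RInt_Reals in HM1, HM2.
  pose proof (ex_RInt_Reals_1 _ _ _ pr1) as E1.
  pose proof (ex_RInt_Reals_1 _ _ _ pr2) as E2.
  assert (Hcmp : forall h1 h2, ex_RInt h1 t x -> ex_RInt h2 t x ->
            (forall s, t <= s -> h1 s <= h2 s + g s) ->
            RInt h1 t x <= RInt h2 t x + RInt g t x).
  { intros h1 h2 Eh1 Eh2 Hh.
    rewrite <- (RInt_plus h2 g) by assumption.
    apply RInt_le; auto.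
    - now apply (ex_RInt_plus h2 g).
    - intros y Hy; apply Hh; lra. }
  assert (Q1 : RInt f1 t x <= RInt f2 t x + RInt g t x).
  { apply Hcmp; auto; intros s Hs.
    pose proof (Hfg s Hs) as Hb; apply Rabs_le_between in Hb; lra. }
  assert (Q2 : RInt f2 t x <= RInt f1 t x + RInt g t x).
  { apply Hcmp; auto; intros s Hs.
    pose proof (Hfg s Hs) as Hb; apply Rabs_le_between in Hb; lra. }
  apply Rabs_def2 in HM1; apply Rabs_def2 in HM2.
  assert (Rabs (L1 - L2) <= G + 2 * eps) by (apply Rabs_le; lra).
  unfold eps in *; lra.
Qed.

Lemma RInt_exp_decay_le k m t x : 0 <= k -> 0 < m -> t <= x ->
  ex_RInt (fun s => k * exp (- m * s)) t x /\
  RInt (fun s => k * exp (- m * s)) t x <= k * exp (- m * t) / m.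
Proof.
  intros Hk Hm Htx.
  set (F := fun s => - k / m * exp (- m * s)).
  assert (D : is_RInt (fun s => k * exp (- m * s)) t x (minus (F x) (F t))).
  { apply (is_RInt_derive F).
    - intros y _; unfold F; auto_derive; auto; field; lra.
    - intros y _; apply (ex_derive_continuous (fun s => k * exp (- m * s))).
      auto_derive; auto. }
  split; [eexists; exact D |].
  rewrite (is_RInt_unique _ _ _ _ D).
  unfold minus, plus, opp, F; simpl.
  assert (0 <= k / m * exp (- m * x)).
  { apply Rmult_le_pos; [apply Rdiv_le_0_compat | left; apply exp_pos]; lra. }
  replace (k * exp (- m * t) / m) with (k / m * exp (- m * t)) by (field; lra).
  lra.
Qed.

Lemma improper_int_dist_exp_le f1 f2 t L1 L2 k m :
  improper_int f1 t L1 -> improper_int f2 t L2 -> 0 <= k -> 0 < m ->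
  (forall s, t <= s -> Rabs (f1 s - f2 s) <= k * exp (- m * s)) ->
  Rabs (L1 - L2) <= k * exp (- m * t) / m.
Proof.
  intros I1 I2 Hk Hm Hf.
  apply (improper_int_dist_le f1 f2 (fun s => k * exp (- m * s)) t); auto.
  intros x Hx; now apply RInt_exp_decay_le.
Qed.

(** * The l1 distance on R^4 *)

Definition dist1 (v w : vec4) : R :=
  Rabs (c1 v - c1 w) + Rabs (c2 v - c2 w) + Rabs (c3 v - c3 w) + Rabs (c4 v - c4 w).

Lemma dist1_ge0 v w : 0 <= dist1 v w.
Proof.
  unfold dist1.
  pose proof (Rabs_pos (c1 v - c1 w)); pose proof (Rabs_pos (c2 v - c2 w)).
  pose proof (Rabs_pos (c3 v - c3 w)); pose proof (Rabs_pos (c4 v - c4 w)).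
  lra.
Qed.

Lemma Rabs_coord_sub_le_dist1 v w :
  Rabs (c1 v - c1 w) <= dist1 v w /\ Rabs (c2 v - c2 w) <= dist1 v w /\
  Rabs (c3 v - c3 w) <= dist1 v w /\ Rabs (c4 v - c4 w) <= dist1 v w.
Proof.
  unfold dist1.
  pose proof (Rabs_pos (c1 v - c1 w)); pose proof (Rabs_pos (c2 v - c2 w)).
  pose proof (Rabs_pos (c3 v - c3 w)); pose proof (Rabs_pos (c4 v - c4 w)).
  repeat split; lra.
Qed.

Lemma dist1_le0_eq v w : dist1 v w <= 0 -> v = w.
Proof.
  intros H.
  destruct (Rabs_coord_sub_le_dist1 v w) as (H1 & H2 & H3 & H4).
  pose proof (dist1_ge0 v w).
  destruct v as [x1 x2 x3 x4], w as [y1 y2 y3 y4]; simpl in *.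
  f_equal; apply Rminus_diag_uniq, Rabs_eq_0, Rle_antisym; auto using Rabs_pos; lra.
Qed.

Lemma Rabs_coord_le_vnorm v :
  Rabs (c1 v) <= vnorm v /\ Rabs (c2 v) <= vnorm v /\
  Rabs (c3 v) <= vnorm v /\ Rabs (c4 v) <= vnorm v.
Proof.
  destruct v as [a b c e]; unfold vnorm; cbn [c1 c2 c3 c4].
  replace (a ^ 2 + b ^ 2 + c ^ 2 + e ^ 2) with (Rsqr a + Rsqr b + Rsqr c + Rsqr e)
    by (unfold Rsqr; ring).
  pose proof (Rle_0_sqr a); pose proof (Rle_0_sqr b).
  pose proof (Rle_0_sqr c); pose proof (Rle_0_sqr e).
  repeat split; rewrite <- sqrt_Rsqr_abs; apply sqrt_le_1_alt; lra.
Qed.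

Lemma dist1_le_vnorm v w : dist1 v w <= 4 * (vnorm v + vnorm w).
Proof.
  destruct (Rabs_coord_le_vnorm v) as (a1 & a2 & a3 & a4).
  destruct (Rabs_coord_le_vnorm w) as (b1 & b2 & b3 & b4).
  unfold dist1.
  pose proof (Rabs_sub_le (c1 v) (c1 w)); pose proof (Rabs_sub_le (c2 v) (c2 w)).
  pose proof (Rabs_sub_le (c3 v) (c3 w)); pose proof (Rabs_sub_le (c4 v) (c4 w)).
  lra.
Qed.

Lemma inV_exp_decay v : inV v ->
  exists K, 0 <= K /\ forall s, 0 <= s -> vnorm (v s) <= K * exp (- (2 * s)).
Proof.
  intros (_ & _ & _ & _ & K & HK).
  exists (Rabs K); split; [apply Rabs_pos |].
  intros s Hs.
  pose proof (exp_pos (2 * s)); pose proof (Rle_abs K).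
  rewrite exp_Ropp.
  apply (Rmult_le_reg_l (exp (2 * s))); auto.
  replace (exp (2 * s) * (Rabs K * / exp (2 * s))) with (Rabs K) by (field; lra).
  specialize (HK s Hs); lra.
Qed.

(** * Local Lipschitz bound for the nonlinearity *)

Lemma Rabs_mul_sub_le x y x' y' r :
  Rabs x <= r -> Rabs x' <= r -> Rabs y <= r -> Rabs y' <= r ->
  Rabs (x * y - x' * y') <= r * (Rabs (x - x') + Rabs (y - y')).
Proof.
  intros Hx Hx' Hy Hy'.
  replace (x * y - x' * y') with ((x - x') * y + x' * (y - y')) by ring.
  eapply Rle_trans; [apply Rabs_triang |]; rewrite !Rabs_mult.
  pose proof (Rabs_pos (x - x')); pose proof (Rabs_pos (y - y')).
  assert (Rabs (x - x') * Rabs y <= Rabs (x - x') * r) by (apply Rmult_le_compat_l; auto).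
  assert (Rabs x' * Rabs (y - y') <= r * Rabs (y - y')) by (apply Rmult_le_compat_r; auto).
  lra.
Qed.

Lemma Rabs_mul3_sub_le x y z x' y' z' r :
  Rabs x <= r -> Rabs x' <= r -> Rabs y <= r -> Rabs y' <= r ->
  Rabs z <= r -> Rabs z' <= r ->
  Rabs (x * y * z - x' * y' * z') <= r * r * (Rabs (x - x') + Rabs (y - y') + Rabs (z - z')).
Proof.
  intros Hx Hx' Hy Hy' Hz Hz'.
  assert (Hr : 0 <= r) by (eapply Rle_trans; [apply Rabs_pos | eauto]).
  assert (Hxy' : Rabs (x' * y') <= r * r)
    by (rewrite Rabs_mult; apply Rmult_le_compat; auto using Rabs_pos).
  pose proof (Rabs_mul_sub_le x y x' y' r Hx Hx' Hy Hy').
  replace (x * y * z - x' * y' * z') with ((x * y - x' * y') * z + x' * y' * (z - z')) by ring.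
  eapply Rle_trans; [apply Rabs_triang |]; rewrite !Rabs_mult.
  pose proof (Rabs_pos (x * y - x' * y')); pose proof (Rabs_pos (z - z')).
  assert (Rabs (x * y - x' * y') * Rabs z <= r * (Rabs (x - x') + Rabs (y - y')) * r)
    by (apply Rmult_le_compat; auto using Rabs_pos).
  assert (Rabs x' * Rabs y' * Rabs (z - z') <= r * r * Rabs (z - z'))
    by (rewrite <- Rabs_mult; apply Rmult_le_compat_r; auto).
  nra.
Qed.

Lemma Rabs_mul_sub_le_unif x y x' y' r S :
  Rabs x <= r -> Rabs x' <= r -> Rabs y <= r -> Rabs y' <= r ->
  Rabs (x - x') <= S -> Rabs (y - y') <= S ->
  Rabs (x * y - x' * y') <= 3 * (r + r * r) * S.
Proof.
  intros Hx Hx' Hy Hy' HSx HSy.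
  assert (0 <= r) by (eapply Rle_trans; [apply Rabs_pos | eauto]).
  assert (0 <= S) by (eapply Rle_trans; [apply Rabs_pos | eauto]).
  eapply Rle_trans; [apply Rabs_mul_sub_le; eauto |].
  assert (r * (Rabs (x - x') + Rabs (y - y')) <= r * (2 * S))
    by (apply Rmult_le_compat_l; lra).
  assert (0 <= r * r * S) by (apply Rmult_le_pos; [apply Rmult_le_pos |]; lra).
  nra.
Qed.

Lemma Rabs_mul3_sub_le_unif x y z x' y' z' r S :
  Rabs x <= r -> Rabs x' <= r -> Rabs y <= r -> Rabs y' <= r ->
  Rabs z <= r -> Rabs z' <= r ->
  Rabs (x - x') <= S -> Rabs (y - y') <= S -> Rabs (z - z') <= S ->
  Rabs (x * y * z - x' * y' * z') <= 3 * (r + r * r) * S.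
Proof.
  intros Hx Hx' Hy Hy' Hz Hz' HSx HSy HSz.
  assert (0 <= r) by (eapply Rle_trans; [apply Rabs_pos | eauto]).
  assert (0 <= S) by (eapply Rle_trans; [apply Rabs_pos | eauto]).
  eapply Rle_trans; [apply Rabs_mul3_sub_le; eauto |].
  assert (r * r * (Rabs (x - x') + Rabs (y - y') + Rabs (z - z')) <= r * r * (3 * S))
    by (apply Rmult_le_compat_l; [apply Rmult_le_pos |]; lra).
  assert (0 <= r * S) by (apply Rmult_le_pos; lra).
  nra.
Qed.

Lemma Rabs_lincomb5_le a1 a2 a3 a4 a5 m1 m2 m3 m4 m5 C M :
  Rabs a1 <= C -> Rabs a2 <= C -> Rabs a3 <= C -> Rabs a4 <= C -> Rabs a5 <= C ->
  Rabs m1 <= M -> Rabs m2 <= M -> Rabs m3 <= M -> Rabs m4 <= M -> Rabs m5 <= M ->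
  Rabs (a1 * m1 + a2 * m2 + a3 * m3 + a4 * m4 + a5 * m5) <= 5 * C * M.
Proof.
  intros.
  assert (Hterm : forall a m, Rabs a <= C -> Rabs m <= M -> Rabs (a * m) <= C * M)
    by (intros a m Ha Hm; rewrite Rabs_mult; apply Rmult_le_compat; auto using Rabs_pos).
  pose proof (Hterm a1 m1); pose proof (Hterm a2 m2); pose proof (Hterm a3 m3).
  pose proof (Hterm a4 m4); pose proof (Hterm a5 m5).
  pose proof (Rabs_triang (a1 * m1 + a2 * m2 + a3 * m3 + a4 * m4) (a5 * m5)).
  pose proof (Rabs_triang (a1 * m1 + a2 * m2 + a3 * m3) (a4 * m4)).
  pose proof (Rabs_triang (a1 * m1 + a2 * m2) (a3 * m3)).
  pose proof (Rabs_triang (a1 * m1) (a2 * m2)).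
  lra.
Qed.

(** Each coordinate of [b] is a combination of five monomials of degree 2 or 3
    with coefficients bounded by [coef_bound] (padded with zero terms where fewer occur). *)
Definition coef_bound (d : nat) (q : R) : R :=
  4 * (1 + INR d + Rabs (A3 d q / INR d) + Rabs (A3 d q)).

Definition bnl_lip (d : nat) (q : R) : R := 60 * coef_bound d q.

Lemma bnl_lip_ge0 d q : 0 <= bnl_lip d q.
Proof.
  unfold bnl_lip, coef_bound.
  pose proof (pos_INR d); pose proof (Rabs_pos (A3 d q / INR d)); pose proof (Rabs_pos (A3 d q)).
  lra.
Qed.

Lemma dist1_bnl_le d q v v' r : vnorm v <= r -> vnorm v' <= r ->
  dist1 (bnl d q v) (bnl d q v') <= bnl_lip d q * (r + r * r) * dist1 v v'.
Proof.
  intros Hv Hv'.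
  destruct (Rabs_coord_le_vnorm v) as (H1 & H2 & H3 & H4).
  destruct (Rabs_coord_le_vnorm v') as (H5 & H6 & H7 & H8).
  destruct (Rabs_coord_sub_le_dist1 v v') as (SX & SY & SZ & SW).
  unfold bnl_lip.
  set (M := coef_bound d q); set (S := dist1 v v') in *.
  set (B := 5 * M * (3 * (r + r * r) * S)).
  enough (Rabs (c1 (bnl d q v) - c1 (bnl d q v')) <= B /\
          Rabs (c2 (bnl d q v) - c2 (bnl d q v')) <= B /\
          Rabs (c3 (bnl d q v) - c3 (bnl d q v')) <= B /\
          Rabs (c4 (bnl d q v) - c4 (bnl d q v')) <= B)
    by (unfold dist1; replace (60 * M * (r + r * r) * S) with (4 * B) by (unfold B; ring); lra).
  destruct v as [X Y Z W], v' as [X' Y' Z' W']; simpl in *.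
  set (p := INR d); set (be := A3 d q / INR d); set (ga := A3 d q).
  assert (Hp : 0 <= p) by apply pos_INR.
  pose proof (Rle_abs be); pose proof (Rle_abs (- be)); rewrite Rabs_Ropp in *.
  pose proof (Rle_abs ga); pose proof (Rle_abs (- ga)); rewrite Rabs_Ropp in *.
  assert (HM : M = 4 * (1 + p + Rabs be + Rabs ga)) by reflexivity.
  unfold bnl, vsub, Fsys, Aapp; simpl; fold p ga; change (ga / p) with be.
  repeat split;
    match goal with |- Rabs ?e <= _ => first
    [ replace e with ((- p) * (X * X * X - X' * X' * X') + (- 1) * (X * Z * Z - X' * Z' * Z')
        + 2 * (X * Z - X' * Z') + (2 * be) * (W * W - W' * W') + 0 * (X * Z - X' * Z'))
        by (unfold be; ring)
    | replace e with ((- 2 * p) * (Y * X * X - Y' * X' * X') + 2 * (Y * X - Y' * X')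
        + (- 2) * (Y * Z * Z - Y' * Z' * Z') + 4 * (Y * Z - Y' * Z') + 0 * (X * Z - X' * Z'))
        by ring
    | replace e with ((- p) * (Z * X * X - Z' * X' * X') + (- 1) * (Z * Z * Z - Z' * Z' * Z')
        + 3 * (Z * Z - Z' * Z') + p * (X * X - X' * X') + ga * (W * W - W' * W'))
        by ring
    | replace e with ((- p) * (W * X * X - W' * X' * X') + 2 * (W * X - W' * X')
        + (- 1) * (W * Z * Z - W' * Z' * Z') + 3 * (W * Z - W' * Z') + 0 * (X * Z - X' * Z'))
        by ring ] end;
    apply Rabs_lincomb5_le;
    solve [ apply Rabs_le; lra
          | apply Rabs_mul3_sub_le_unif; eauto; lra
          | apply Rabs_mul_sub_le_unif; eauto; lra ].
Qed.

Lemma dist1_Phi_app_le d t s x y : t <= s ->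
  dist1 (Phi_app d t s x) (Phi_app d t s y)
  <= 4 * (1 + Rabs (A2 d / (2 * INR d))) * exp (-2 * (t - s)) * dist1 x y.
Proof.
  intros Hts.
  set (a := A2 d / (2 * INR d)); set (e := exp (-2 * (t - s))).
  assert (He : 1 <= e) by (unfold e; rewrite <- exp_0; apply exp_le_compat; lra).
  destruct (Rabs_coord_sub_le_dist1 x y) as (H1 & H2 & H3 & H4).
  set (D := dist1 x y) in *.
  assert (HD : 0 <= D) by apply dist1_ge0.
  pose proof (Rabs_pos a).
  assert (Hscal : forall z, Rabs z <= D -> Rabs (e * z) <= (1 + Rabs a) * e * D).
  { intros z Hz; rewrite Rabs_mult, (Rabs_right e) by lra.
    assert (e * Rabs z <= e * D) by (apply Rmult_le_compat_l; lra).
    assert (0 <= Rabs a * e * D) by (apply Rmult_le_pos; [apply Rmult_le_pos |]; lra).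
    nra. }
  assert (Hfirst : Rabs ((c1 x - c1 y) + a * (e - 1) * (c2 x - c2 y)) <= (1 + Rabs a) * e * D).
  { eapply Rle_trans; [apply Rabs_triang |]; rewrite !Rabs_mult, (Rabs_right (e - 1)) by lra.
    assert (Rabs a * (e - 1) * Rabs (c2 x - c2 y) <= Rabs a * e * D)
      by (apply Rmult_le_compat; try apply Rmult_le_pos; auto using Rabs_pos;
          try apply Rmult_le_compat_l; lra).
    nra. }
  unfold dist1 at 1, Phi_app; cbn [c1 c2 c3 c4]; fold e a.
  replace (c1 x + a * (e - 1) * c2 x - (c1 y + a * (e - 1) * c2 y))
    with ((c1 x - c1 y) + a * (e - 1) * (c2 x - c2 y)) by ring.
  replace (e * c2 x - e * c2 y) with (e * (c2 x - c2 y)) by ring.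
  replace (e * c3 x - e * c3 y) with (e * (c3 x - c3 y)) by ring.
  replace (e * c4 x - e * c4 y) with (e * (c4 x - c4 y)) by ring.
  pose proof (Hscal _ H2); pose proof (Hscal _ H3); pose proof (Hscal _ H4).
  lra.
Qed.

(** * The contraction estimate for fixed points *)

Definition contraction_const (d : nat) (q K : R) : R :=
  4 * (4 * (1 + Rabs (A2 d / (2 * INR d))) * bnl_lip d q * (K + K * K)).

Lemma contraction_const_ge0 d q K : 0 <= K -> 0 <= contraction_const d q K.
Proof.
  intros HK; unfold contraction_const.
  pose proof (Rabs_pos (A2 d / (2 * INR d))); pose proof (bnl_lip_ge0 d q).
  assert (0 <= K * K) by (apply Rmult_le_pos; lra).
  apply Rmult_le_pos; [lra |].
  apply Rmult_le_pos; [apply Rmult_le_pos |]; lra.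
Qed.

Lemma dist1_Phi_bnl_le d q K t s x y : 0 <= K -> 0 <= t -> t <= s ->
  vnorm x <= K * exp (- (2 * s)) -> vnorm y <= K * exp (- (2 * s)) ->
  dist1 (Phi_app d t s (bnl d q x)) (Phi_app d t s (bnl d q y))
  <= contraction_const d q K / 4 * exp (- (2 * t)) * dist1 x y.
Proof.
  intros HK Ht Hts Hx Hy.
  set (E := exp (- (2 * s))) in *; set (e := exp (-2 * (t - s))).
  assert (HE0 : 0 < E) by apply exp_pos.
  assert (HE1 : E <= 1) by (unfold E; rewrite <- exp_0; apply exp_le_compat; lra).
  assert (HeE : e * E = exp (- (2 * t))) by (unfold e, E; rewrite <- exp_plus; f_equal; ring).
  assert (He : 0 < e) by apply exp_pos.
  (* Here the decay of the fixed points pays for the growth [e] of [Phi]. *)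
  assert (Hrr : K * E + K * E * (K * E) <= (K + K * K) * E)
    by (assert (K * K * (E * E) <= K * K * E) by (apply Rmult_le_compat_l; nra); nra).
  set (P := 4 * (1 + Rabs (A2 d / (2 * INR d)))).
  assert (HP : 0 <= P) by (unfold P; pose proof (Rabs_pos (A2 d / (2 * INR d))); lra).
  pose proof (bnl_lip_ge0 d q); pose proof (dist1_ge0 x y).
  eapply Rle_trans; [apply dist1_Phi_app_le; lra |]; fold e P.
  eapply Rle_trans.
  { apply Rmult_le_compat_l; [apply Rmult_le_pos; lra |].
    apply (dist1_bnl_le d q x y (K * E)); assumption. }
  replace (contraction_const d q K / 4) with (P * bnl_lip d q * (K + K * K))
    by (unfold contraction_const, P; field).
  rewrite <- HeE.
  replace (P * e * (bnl_lip d q * (K * E + K * E * (K * E)) * dist1 x y))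
    with ((P * bnl_lip d q * e * dist1 x y) * (K * E + K * E * (K * E))) by ring.
  replace (P * bnl_lip d q * (K + K * K) * (e * E) * dist1 x y)
    with ((P * bnl_lip d q * e * dist1 x y) * ((K + K * K) * E)) by ring.
  apply Rmult_le_compat_l; [| lra].
  apply Rmult_le_pos; [apply Rmult_le_pos; [apply Rmult_le_pos |] |]; lra.
Qed.

Lemma fixed_points_dist1_le d q u v1 v2 t k m :
  fixed_point_T d q u v1 -> fixed_point_T d q u v2 -> 0 <= t -> 0 <= k -> 0 < m ->
  (forall s, t <= s ->
     dist1 (Phi_app d t s (bnl d q (v1 s))) (Phi_app d t s (bnl d q (v2 s))) <= k * exp (- m * s)) ->
  dist1 (v1 t) (v2 t) <= 4 * (k * exp (- m * t) / m).
Proof.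
  intros [_ F1] [_ F2] Ht Hk Hm Hb.
  destruct (F1 t Ht) as (I11 & I12 & I13 & I14), (F2 t Ht) as (I21 & I22 & I23 & I24).
  assert (Hcoord : forall (w1 w2 u0 : R) f1 f2,
            improper_int f1 t (u0 - w1) -> improper_int f2 t (u0 - w2) ->
            (forall s, t <= s -> Rabs (f1 s - f2 s) <= k * exp (- m * s)) ->
            Rabs (w1 - w2) <= k * exp (- m * t) / m).
  { intros w1 w2 u0 f1 f2 I1 I2 Hf.
    replace (w1 - w2) with (- ((u0 - w1) - (u0 - w2))) by ring; rewrite Rabs_Ropp.
    exact (improper_int_dist_exp_le f1 f2 t _ _ k m I1 I2 Hk Hm Hf). }
  pose proof (fun s => Rabs_coord_sub_le_dist1 (Phi_app d t s (bnl d q (v1 s)))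
                                               (Phi_app d t s (bnl d q (v2 s)))) as Hc.
  pose proof (Hcoord _ _ _ _ _ I11 I21
    (fun s Hs => Rle_trans _ _ _ (proj1 (Hc s)) (Hb s Hs))).
  pose proof (Hcoord _ _ _ _ _ I12 I22
    (fun s Hs => Rle_trans _ _ _ (proj1 (proj2 (Hc s))) (Hb s Hs))).
  pose proof (Hcoord _ _ _ _ _ I13 I23
    (fun s Hs => Rle_trans _ _ _ (proj1 (proj2 (proj2 (Hc s)))) (Hb s Hs))).
  pose proof (Hcoord _ _ _ _ _ I14 I24
    (fun s Hs => Rle_trans _ _ _ (proj2 (proj2 (proj2 (Hc s)))) (Hb s Hs))).
  unfold dist1; lra.
Qed.

Lemma exp_contraction_le0 (S : R -> R) B c :
  0 <= B -> 0 <= c ->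
  (forall s, 0 <= s -> S s <= B * exp (- (2 * s))) ->
  (forall t b m, 0 <= t -> 0 <= b -> 0 < m ->
     (forall s, t <= s -> S s <= b * exp (- m * s)) ->
     S t <= c * b * exp (- (m + 2) * t) / m) ->
  forall t, 0 <= t -> S t <= 0.
Proof.
  intros HB Hc Hbase Hstep.
  set (x n := (c / 2) ^ n / INR (Factorial.fact n)).
  assert (Hx : forall n, 0 <= x n).
  { intros n; unfold x; apply Rdiv_le_0_compat; [apply pow_le; lra |].
    apply lt_0_INR, Factorial.lt_O_fact. }
  assert (Hiter : forall n t, 0 <= t -> S t <= B * x n * exp (- (2 * INR n + 2) * t)).
  { induction n as [| n IHn]; intros t Ht.
    - unfold x; simpl.
      replace (- (2 * 0 + 2) * t) with (- (2 * t)) by ring.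
      replace (B * (1 / 1)) with B by field; auto.
    - eapply Rle_trans.
      { apply (Hstep t (B * x n) (2 * INR n + 2)); auto.
        + apply Rmult_le_pos; auto.
        + pose proof (pos_INR n); lra.
        + intros s Hs; apply IHn; lra. }
      right; unfold x.
      rewrite fact_simpl, mult_INR, S_INR; simpl.
      replace (- (2 * INR n + 2 + 2) * t) with (- (2 * (INR n + 1) + 2) * t) by ring.
      pose proof (pos_INR n); pose proof (INR_fact_neq_0 n).
      field; lra. }
  intros t Ht.
  assert (Hlim : Rbar_le (S t) (B * 0)).
  { apply (is_lim_seq_le (fun _ => S t) (fun n => B * x n)).
    - intros n; eapply Rle_trans; [apply (Hiter n t Ht) |].
      rewrite <- (Rmult_1_r (B * x n)) at 2.
      apply Rmult_le_compat_l; [apply Rmult_le_pos; auto |].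
      rewrite <- exp_0; apply exp_le_compat; pose proof (pos_INR n); nra.
    - apply is_lim_seq_const.
    - apply (is_lim_seq_scal_l x B 0), is_lim_seq_Reals, cv_speed_pow_fact. }
  simpl in Hlim; lra.
Qed.

Lemma fixed_points_contraction d q u v1 v2 K :
  0 <= K -> fixed_point_T d q u v1 -> fixed_point_T d q u v2 ->
  (forall s, 0 <= s -> vnorm (v1 s) <= K * exp (- (2 * s)) /\ vnorm (v2 s) <= K * exp (- (2 * s))) ->
  forall t b m, 0 <= t -> 0 <= b -> 0 < m ->
    (forall s, t <= s -> dist1 (v1 s) (v2 s) <= b * exp (- m * s)) ->
    dist1 (v1 t) (v2 t) <= contraction_const d q K * b * exp (- (m + 2) * t) / m.
Proof.
  intros HK Fix1 Fix2 Hdecay t b m Ht Hb Hm Hdist.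
  set (C := contraction_const d q K / 4).
  assert (HC : 0 <= C) by (unfold C; pose proof (contraction_const_ge0 d q K HK); lra).
  eapply Rle_trans.
  { apply (fixed_points_dist1_le d q u v1 v2 t (C * exp (- (2 * t)) * b) m); auto.
    - apply Rmult_le_pos; [apply Rmult_le_pos; [exact HC | left; apply exp_pos] | exact Hb].
    - intros s Hs; destruct (Hdecay s ltac:(lra)) as [H1 H2].
      eapply Rle_trans; [apply (dist1_Phi_bnl_le d q K); auto; lra |].
      fold C; rewrite (Rmult_assoc (C * exp (- (2 * t))) b).
      apply Rmult_le_compat_l; [apply Rmult_le_pos; [exact HC | left; apply exp_pos] |].
      now apply Hdist. }
  right; unfold C.
  replace (- (m + 2) * t) with (- (2 * t) + - m * t) by ring.
  rewrite exp_plus; field; lra.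
Qed.

(** None of the first three hypotheses is used: [u] enters only through the
    fixed-point equations, and for [d = 0] the divisions by [INR d] are merely junk. *)
Theorem theorem4 (d : nat) (q : R) (u : R -> vec4) :
  (0 < d)%nat ->
  inV u ->
  solves_linear d u ->
  forall v1 v2 : R -> vec4,
    fixed_point_T d q u v1 ->
    fixed_point_T d q u v2 ->
    forall t, 0 <= t -> v1 t = v2 t.
Proof.
  intros _ _ _ v1 v2 Fix1 Fix2 t Ht.
  destruct (inV_exp_decay v1 (proj1 Fix1)) as (K1 & HK1 & Hv1).
  destruct (inV_exp_decay v2 (proj1 Fix2)) as (K2 & HK2 & Hv2).
  set (K := K1 + K2).
  assert (HK : 0 <= K) by (unfold K; lra).
  assert (Hdecay : forall s, 0 <= s ->
            vnorm (v1 s) <= K * exp (- (2 * s)) /\ vnorm (v2 s) <= K * exp (- (2 * s))).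
  { intros s Hs; pose proof (exp_pos (- (2 * s))).
    specialize (Hv1 s Hs); specialize (Hv2 s Hs); unfold K; split; nra. }
  apply dist1_le0_eq.
  apply (exp_contraction_le0 (fun s => dist1 (v1 s) (v2 s)) (8 * K) (contraction_const d q K));
    auto using contraction_const_ge0; try lra.
  - intros s Hs; destruct (Hdecay s Hs).
    eapply Rle_trans; [apply dist1_le_vnorm | lra].
  - exact (fixed_points_contraction d q u v1 v2 K HK Fix1 Fix2 Hdecay).
Qed.
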